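(* Label the hyperedges so that $|h_1|\le|h_2|\le\dots\le|h_M|$. If $N\ge2$ and $M\ge2$, then $$\lambda_{N-1}\le\max\{|h_M|-1,\ |h_{M-1}|\}.$$ More generally, for every integer $k$ with $1\le k\le\min(N,M)-1$, $$\lambda_{N-k}\le\max_{i=0,\dots,k}\bigl(|h_{M-i}|-k+i\bigr).$$
   Context: Let $\Gamma=(V,H,\mathcal C)$ be a hypergraph with real coefficients: $V=\{v_1,\dots,v_N\}$ is a finite set of vertices, $H=(h_1,\dots,h_M)$ is a finite family of non-empty subsets $h_j\subseteq V$ called hyperedges (repetitions allowed; hyperedges are distinguished by their index), and $\mathcal C=\{C_{v,h}\in\mathbb R\}$ is a family of real coefficients with $C_{v,h}=0$ if and only if $v\notin h$. Standing assumptions: every vertex lies in at least one hyperedge, and $\Gamma$ is connected. The degree of $v$ is $\deg v=\sum_{h\in H}C_{v,h}^2>0$. The vertex normalized Laplacian is $Lf(v)=\frac{1}{\deg v}\sum_{h\in H}C_{v,h}\sum_{w\in V}C_{w,h}f(w)$; its eigenvalues are $\lambda_1\le\dots\le\lambda_N$. The cardinality $|h|$ of a hyperedge is its number of vertices. *)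

From HB Require Import structures.
From mathcomp Require Import all_boot all_order all_algebra.
From mathcomp Require Import reals.
Set Implicit Arguments. Unset Strict Implicit. Unset Printing Implicit Defensive.
Import Order.TTheory GRing.Theory Num.Theory.
Local Open Scope ring_scope.

(* A hypergraph with real coefficients on vertices 'I_N and hyperedges 'I_M
   is encoded by its coefficient matrix C : 'M[R]_(N, M), C v h = C_{v,h};
   the hyperedge h is the set of vertices v with C v h != 0. *)

Definition hedge (R : realType) (N M : nat) (C : 'M[R]_(N, M)) (j : 'I_M)
  : {set 'I_N} := [set v | C v j != 0].

(* cardinalities |h_1|, ..., |h_M| as a (0-indexed) sequence *)
Definition hsizes (R : realType) (N M : nat) (C : 'M[R]_(N, M)) : seq nat :=
  [seq #|hedge C j| | j <- enum 'I_M].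

Definition hedges_nonempty (R : realType) (N M : nat) (C : 'M[R]_(N, M)) :=
  forall j : 'I_M, hedge C j != set0.

Definition vertices_covered (R : realType) (N M : nat) (C : 'M[R]_(N, M)) :=
  forall v : 'I_N, exists j : 'I_M, v \in hedge C j.

Definition hadj (R : realType) (N M : nat) (C : 'M[R]_(N, M)) : rel 'I_N :=
  fun v w => [exists j : 'I_M, (v \in hedge C j) && (w \in hedge C j)].

Definition hconnected (R : realType) (N M : nat) (C : 'M[R]_(N, M)) :=
  forall v w : 'I_N, connect (hadj C) v w.

Definition hdeg (R : realType) (N M : nat) (C : 'M[R]_(N, M)) (v : 'I_N) : R :=
  \sum_(j < M) C v j ^+ 2.

Definition vlaplacian (R : realType) (N M : nat) (C : 'M[R]_(N, M))
  : 'M[R]_N :=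
  \matrix_(v, w) ((hdeg C v)^-1 * \sum_(j < M) C v j * C w j).

(* lam is the nondecreasing list lambda_1 <= ... <= lambda_N of the
   eigenvalues of A, repeated according to (algebraic) multiplicity *)
Definition eigenvalue_list (R : realType) (N : nat) (A : 'M[R]_N)
  (lam : seq R) :=
  [/\ size lam = N, sorted <=%R lam &
      char_poly A = \prod_(x <- lam) ('X - x%:P)].

From HB Require Import structures.
From mathcomp Require Import all_boot all_order all_algebra.
From mathcomp Require Import reals.
From mathcomp Require Import complex spectral zify ring.
Set Implicit Arguments. Unset Strict Implicit. Unset Printing Implicit Defensive.
Import Order.TTheory GRing.Theory Num.Theory.
Local Open Scope ring_scope.
Local Open Scope sesquilinear_scope.

(* Let B be the normalized incidence matrix B_{v,h} = C_{v,h} / sqrt(deg v):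
   its rows are unit vectors and L = D^{-1/2} (B B^T) D^{1/2}, so L has the
   eigenvalues of the Gram matrix B B^T.  A min-max counting principle for
   normal matrices says that if the quadratic form is at most c |x|^2 on the
   common kernel of m linear forms, then at most m eigenvalues exceed c.
   Take for the m = k forms the coordinates x |-> (x B)_h of the k largest
   hyperedges; on their kernel, Cauchy-Schwarz on each remaining column gives
   x B B^T x^T = sum_h (x B)_h^2 <= sum_h |h| sum_(v in h) x_v^2 B_{v,h}^2
   <= |h_{M-k}| |x|^2.  Hence lambda_{N-k} <= |h_{M-k}|, which is the term
   i = k of the maximum in the theorem (and the second argument of the max
   for k = 1).  The spectral theorem is only available over an algebraically
   closed field, so the counting is done after embedding R into R[i]. *)

Lemma sqr_sum_le_card_sum_sqr (R : numDomainType) (I : finType) (A : {set I})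
    (r : I -> R) :
  (forall u, 0 <= r u) ->
  (\sum_(u in A) r u) ^+ 2 <= #|A|%:R * \sum_(u in A) r u ^+ 2.
Proof.
move=> r_ge0; set S1 := \sum_(u in A) r u; set S2 := \sum_(u in A) r u ^+ 2.
have row_sum u :
    \sum_(v in A) (r u - r v) ^+ 2 = r u ^+ 2 *+ #|A| - (r u * S1) *+ 2 + S2.
  rewrite (eq_bigr (fun v => r u ^+ 2 - r u * r v *+ 2 + r v ^+ 2)) => [|v _].
    by rewrite big_split sumrB sumr_const sumrMnl -mulr_sumr.
  by rewrite sqrrB.
have double_sum : \sum_(u in A) \sum_(v in A) (r u - r v) ^+ 2
    = (#|A|%:R * S2 - S1 ^+ 2) *+ 2.
  rewrite (eq_bigr _ (fun u _ => row_sum u)) big_split sumrB sumr_const.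
  rewrite !sumrMnl -mulr_suml -/S1 -/S2 -[LHS]/(S2 *+ #|A| - S1 * S1 *+ 2 + S2 *+ #|A|).
  by rewrite mulrnBl mulr_natl expr2 mulr2n addrAC.
have : 0 <= (#|A|%:R * S2 - S1 ^+ 2) *+ 2.
  rewrite -double_sum; apply: sumr_ge0 => u _; apply: sumr_ge0 => v _.
  by rewrite -realEsqr realB ?ger0_real.
by rewrite pmulrn_lge0 // subr_ge0.
Qed.

Lemma char_poly_similar (R : comNzRingType) n (A Q Q' : 'M[R]_n) :
  Q' *m Q = 1%:M -> char_poly (Q' *m A *m Q) = char_poly A.
Proof.
move=> QQ'; have Q'Q := mulmx1C QQ'.
rewrite /char_poly /char_poly_mx.
have -> : 'X%:M - map_mx polyC (Q' *m A *m Q) =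
    map_mx polyC Q' *m ('X%:M - map_mx polyC A) *m map_mx polyC Q.
  rewrite mulmxBr mulmxBl -!map_mxM; congr (_ - _).
  rewrite scalar_mxC mul_scalar_mx -scalemxAl -map_mxM QQ' map_mx1.
  by rewrite -mul_scalar_mx mulmx1.
by rewrite !det_mulmx mulrC mulrA -det_mulmx -map_mxM Q'Q map_mx1 det1 mul1r.
Qed.

Lemma rank_le_of_cap_kermx (F : fieldType) p n m (V : 'M[F]_(p, n))
    (G : 'M[F]_(n, m)) :
  \rank V = p -> (V :&: kermx G)%MS = 0 -> (p <= m)%N.
Proof.
move=> rkV cap0; have := mxrank_sum_cap V (kermx G).
rewrite cap0 mxrank0 addn0 rkV mxrank_ker => sum_rk.
have := rank_leq_col (V + kermx G)%MS; have := rank_leq_row G; have := rank_leq_col G.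
lia.
Qed.

Lemma weighted_sqnorm_le_eq0 (K : numClosedFieldType) (I : finType)
    (d e : I -> K) (c : K) :
  (forall j, e j != 0 -> c < d j) ->
  \sum_j d j * (e j * (e j)^*) <= c * \sum_j e j * (e j)^* ->
  forall j, e j = 0.
Proof.
move=> supp_e le_dc.
pose T j := (d j - c) * (e j * (e j)^*).
have T_ge0 j : 0 <= T j.
  rewrite /T; have [->|ej0] := eqVneq (e j) 0; first by rewrite mul0r mulr0.
  by rewrite mulr_ge0 ?mul_conjC_ge0 // subr_ge0 ltW ?supp_e.
have sumT0 : \sum_j T j = 0.
  apply/le_anti/andP; split; last exact: sumr_ge0.
  rewrite /T; under eq_bigr do rewrite mulrBl.
  by rewrite sumrB -mulr_sumr subr_le0.
move=> j; apply/eqP; apply: contraT => ej0.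
have /eqP : T j = 0 := psumr_eq0P (fun i _ => T_ge0 i) sumT0 (isT : xpredT j).
by rewrite /T mulf_eq0 mul_conjC_eq0 (negPf ej0) orbF subr_eq0 gt_eqF ?supp_e.
Qed.

Section SpectralCount.
Variables (K : numClosedFieldType) (n : nat) (S : 'M[K]_n).
Hypothesis S_normal : S \is normalmx.
Let P := spectralmx S.
Let d := spectral_diag S.

Let P_unitary : P \is unitarymx := spectral_unitarymx S.
Let PPt : P *m P^t* = 1%:M. Proof. exact/unitarymxP. Qed.
Let PtP : P^t* *m P = 1%:M. Proof. exact: mulmx1C PPt. Qed.

Lemma spectral_decomposition : S = P^t* *m diag_mx d *m P.
Proof. by rewrite -invmx_unitary //; apply/orthomx_spectralP. Qed.

Lemma count_spectral (s : seq K) (a : pred K) :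
  char_poly S = \prod_(x <- s) ('X - x%:P) ->
  count a s = #|[pred j | a (d 0 j)]|.
Proof.
move=> charS.
have charS' : char_poly S = \prod_(x <- [seq d 0 j | j <- enum 'I_n]) ('X - x%:P).
  rewrite big_map big_enum /= {1}spectral_decomposition char_poly_similar //.
  rewrite char_poly_trig ?diag_mx_is_trig //.
  by apply: eq_bigr => j _; rewrite mxE eqxx mulr1n.
have /permP -> := prod_XsubC_eq (etrans (esym charS) charS').
by rewrite count_map cardE -size_filter /enum_mem filter_predT.
Qed.

Lemma quad_form_eigenbasis (e : 'rV[K]_n) :
  ((e *m P) *m S *m (e *m P)^t*) 0 0 = \sum_j d 0 j * (e 0 j * (e 0 j)^*).
Proof.
have -> : (e *m P) *m S *m (e *m P)^t* = e *m diag_mx d *m e^t*.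
  rewrite trmx_mul map_mxM spectral_decomposition !mulmxA -(mulmxA e P) PPt.
  by rewrite mulmx1 -!(mulmxA _ P) PPt !mulmx1.
by rewrite mxE; apply: eq_bigr => j _; rewrite mul_mx_diag !mxE mulrAC mulrC.
Qed.

Lemma sqnorm_eigenbasis (e : 'rV[K]_n) :
  ((e *m P) *m (e *m P)^t*) 0 0 = \sum_j e 0 j * (e 0 j)^*.
Proof.
rewrite trmx_mul map_mxM !mulmxA -(mulmxA e P) PPt mulmx1 mxE.
by apply: eq_bigr => j _; rewrite !mxE.
Qed.

Lemma spectral_count_le m (G : 'M[K]_(n, m)) (c : K) (s : seq K) :
  char_poly S = \prod_(x <- s) ('X - x%:P) ->
  (forall x : 'rV[K]_n, x *m G = 0 ->
     (x *m S *m x^t*) 0 0 <= c * (x *m x^t*) 0 0) ->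
  (count (fun x : K => (c < x)%R) s <= m)%N.
Proof.
move=> charS quad_le; rewrite (count_spectral _ charS).
set I := [pred j | c < d 0 j].
pose eig (t : 'I_#|I|) : 'I_n := enum_val t.
pose V := rowsub eig P.
have V_unitary : V \is unitarymx.
  apply/row_unitarymxP => t1 t2; rewrite !row_rowsub.
  by have /row_unitarymxP -> := P_unitary; rewrite (inj_eq enum_val_inj).
apply: (rank_le_of_cap_kermx (G := G) (mxrank_unitary V_unitary)).
apply/eqP; rewrite -submx0; apply/rV_subP => y.
rewrite sub_capmx submx0 => /andP[/submxP[a ->] /sub_kermxP yG].
pose e := a *m V *m P^t*.
have y_eP : a *m V = e *m P by rewrite /e -mulmxA PtP mulmx1.
have supp_e j : e 0 j != 0 -> c < d 0 j.
  apply: contraNT => jI; rewrite /e -mulmxA mxE big1 // => t _.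
  have -> : (V *m P^t*) t j = (eig t == j)%:R.
    have /matrixP/(_ (eig t) j) := PPt; rewrite !mxE => <-.
    by apply: eq_bigr => k _; rewrite !mxE.
  case: eqP => [eig_j|]; last by rewrite mulr0.
  by move: jI; rewrite -eig_j /eig; have := enum_valP t; rewrite inE => ->.
have := quad_le _ yG; rewrite y_eP quad_form_eigenbasis sqnorm_eigenbasis => le_dc.
have e0 := weighted_sqnorm_le_eq0 supp_e le_dc.
by rewrite (_ : e = 0) ?mul0mx //; apply/rowP => j; rewrite e0 mxE.
Qed.

End SpectralCount.

Lemma sorted_nth_le_of_count (R : realDomainType) (s : seq R) (c : R) k :
  sorted <=%R s -> (k < size s)%N -> (count (fun x : R => (c < x)%R) s <= k)%N ->
  s`_(size s - k - 1) <= c.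
Proof.
move=> s_sorted ks; set gt_c := fun x => _ => count_le.
rewrite leNgt; apply/negP => c_lt.
set i := (size s - k - 1)%N; have i_lt : (i < size s)%N by rewrite /i; lia.
have tail_gt : all gt_c (drop i s).
  rewrite (drop_nth 0 i_lt) /= {1}/gt_c c_lt /=.
  have := drop_sorted i s_sorted; rewrite (drop_nth 0 i_lt) /=.
  move=> /(order_path_min le_trans) /allP s_ge; apply/allP => x /s_ge.
  exact: lt_le_trans.
have := count_cat gt_c (take i s) (drop i s).
rewrite cat_take_drop (eqP (etrans (esym (all_count _ _)) tail_gt)) size_drop.
by move: count_le; rewrite /i; lia.
Qed.

Lemma sqnorm_rowE (K : numClosedFieldType) n (y : 'rV[K]_n) :
  (y *m y^t*) 0 0 = \sum_j `|y 0 j| ^+ 2.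
Proof. by rewrite mxE; apply: eq_bigr => j _; rewrite !mxE normCK. Qed.

Lemma sqr_norm_supported_form_le (K : numClosedFieldType) (I : finType)
    (h : {set I}) (x b : I -> K) :
  (forall u, u \notin h -> b u = 0) ->
  `|\sum_u x u * b u| ^+ 2 <= #|h|%:R * \sum_u `|x u| ^+ 2 * `|b u| ^+ 2.
Proof.
move=> supp_b.
have restrict (F : I -> K) : (forall u, b u = 0 -> F u = 0) ->
    \sum_u F u = \sum_(u in h) F u.
  move=> F0; rewrite [RHS]big_mkcond; apply: eq_bigr => u _.
  by case: ifPn => // /supp_b /F0.
rewrite restrict => [|u ->]; last by rewrite mulr0.
rewrite [X in _ <= _ * X]restrict => [|u ->]; last by rewrite normr0 expr0n mulr0.
have le_sq : `|\sum_(u in h) x u * b u| ^+ 2 <= (\sum_(u in h) `|x u * b u|) ^+ 2.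
  by rewrite lerXn2r ?nnegrE ?sumr_ge0 ?ler_norm_sum.
apply: (le_trans le_sq).
apply: le_trans (sqr_sum_le_card_sum_sqr h (fun u => normr_ge0 (x u * b u))) _.
by under eq_bigr do rewrite normrM exprMn.
Qed.

Lemma quad_form_bound (K : numClosedFieldType) n M (B : 'M[K]_(n, M))
    (h : 'I_M -> {set 'I_n}) (killed : pred 'I_M) (c : K) (x : 'rV[K]_n) :
  0 <= c ->
  (forall u j, u \notin h j -> B u j = 0) ->
  (forall u, \sum_j `|B u j| ^+ 2 = 1) ->
  (forall j, ~~ killed j -> #|h j|%:R <= c) ->
  (forall j, killed j -> (x *m B) 0 j = 0) ->
  (x *m (B *m B^t*) *m x^t*) 0 0 <= c * (x *m x^t*) 0 0.
Proof.
move=> c_ge0 supp_B unit_rows size_h x_killed.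
have -> : x *m (B *m B^t*) *m x^t* = (x *m B) *m (x *m B)^t*.
  by rewrite trmx_mul map_mxM !mulmxA.
have -> : c * (x *m x^t*) 0 0 = \sum_j c * \sum_u `|x 0 u| ^+ 2 * `|B u j| ^+ 2.
  rewrite -mulr_sumr sqnorm_rowE exchange_big /=; congr (_ * _).
  by apply: eq_bigr => u _; rewrite -mulr_sumr unit_rows mulr1.
rewrite sqnorm_rowE; apply: ler_sum => j _.
have [/x_killed ->|live_j] := boolP (killed j).
  rewrite normr0 expr0n /= mulr_ge0 //; apply: sumr_ge0 => u _.
  by rewrite mulr_ge0 ?exprn_ge0.
rewrite mxE; apply: le_trans (sqr_norm_supported_form_le (x 0) (supp_B^~ j)) _.
rewrite ler_wpM2r ?size_h //; apply: sumr_ge0 => u _.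
by rewrite mulr_ge0 ?exprn_ge0.
Qed.

Lemma gram_normal (K : numClosedFieldType) n m (A : 'M[K]_(n, m)) :
  A *m A^t* \is normalmx.
Proof.
have herm : (A *m A^t*)^t* = A *m A^t* by rewrite trmx_mul map_mxM trmxCK.
by apply/normalmxP; rewrite herm.
Qed.

Lemma conj_real_complex (R : rcfType) (r : R) :
  (real_complex R r)^* = real_complex R r.
Proof. by apply/CrealP/complex_realP; exists r. Qed.

Lemma map_complex_gram (R : rcfType) n m (B : 'M[R]_(n, m)) :
  map_mx (real_complex R) (B *m B^T) =
  map_mx (real_complex R) B *m (map_mx (real_complex R) B)^t*.
Proof.
rewrite map_mxM map_trmx; congr (_ *m _).
by apply/matrixP => i j; rewrite !mxE conj_real_complex.
Qed.

Section HypergraphSpectrum.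
Variables (R : realType) (N M : nat) (C : 'M[R]_(N, M)).

Lemma size_hsizes : size (hsizes C) = M.
Proof. by rewrite /hsizes size_map size_enum_ord. Qed.

Lemma nth_hsizes (j : 'I_M) : nth 0%N (hsizes C) j = #|hedge C j|.
Proof. by rewrite /hsizes (nth_map j) ?size_enum_ord // nth_ord_enum. Qed.

Hypothesis covered : vertices_covered C.

Lemma hdeg_gt0 v : 0 < hdeg C v.
Proof.
have [j] := covered v; rewrite inE => Cvj0.
rewrite /hdeg (bigD1 j) //= ltr_pwDl ?exprn_even_gt0 //.
by apply: sumr_ge0 => i _; apply: sqr_ge0.
Qed.

Definition nincidence : 'M[R]_(N, M) :=
  \matrix_(v, j) (C v j / Num.sqrt (hdeg C v)).

Lemma nincidence_row_sqnorm v : \sum_j nincidence v j ^+ 2 = 1.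
Proof.
under eq_bigr do rewrite mxE expr_div_n sqr_sqrtr ?ltW ?hdeg_gt0 //.
by rewrite -mulr_suml mulfV // gt_eqF ?hdeg_gt0.
Qed.

Lemma nincidence_supp v j : v \notin hedge C j -> nincidence v j = 0.
Proof. by rewrite inE negbK mxE => /eqP ->; rewrite mul0r. Qed.

(* L = D^{-1/2} (B B^T) D^{1/2}: the Laplacian is similar to B B^T. *)
Lemma char_poly_vlaplacian :
  char_poly (vlaplacian C) = char_poly (nincidence *m nincidence^T).
Proof.
pose s v := Num.sqrt (hdeg C v).
have s_neq0 v : s v != 0 by rewrite gt_eqF ?sqrtr_gt0 ?hdeg_gt0.
have s2 v : s v ^+ 2 = hdeg C v by rewrite sqr_sqrtr ?ltW ?hdeg_gt0.
pose D := diag_mx (\row_v s v); pose D' := diag_mx (\row_v (s v)^-1).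
have D'D : D' *m D = 1%:M.
  apply/matrixP => v w; rewrite mul_diag_mx !mxE.
  by case: (v =P w) => [->|_]; rewrite ?mulr1n ?mulVf ?mulr0n ?mulr0.
rewrite -(char_poly_similar (nincidence *m nincidence^T) D'D); congr char_poly.
apply/matrixP => v w; rewrite mul_mx_diag mul_diag_mx !mxE -/(s v).
rewrite !mulr_sumr mulr_suml; apply: eq_bigr => j _; rewrite !mxE -/(s v) -/(s w) -s2.
by field; rewrite s_neq0 s_neq0.
Qed.

End HypergraphSpectrum.

(* Key estimate: lambda_{N-k} <= |h_{M-k}|.  The k linear forms
   x |-> (x B)_h for the k largest hyperedges h cut out a subspace on which
   the Rayleigh quotient of B B^T is at most |h_{M-k}|. *)
Lemma eigenvalue_le_hsize (R : realType) N M (C : 'M[R]_(N, M)) (lam : seq R) k :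
  vertices_covered C -> sorted leq (hsizes C) ->
  eigenvalue_list (vlaplacian C) lam -> (k < M)%N -> (k < N)%N ->
  lam`_(N - k - 1) <= (nth 0%N (hsizes C) (M - 1 - k))%:R.
Proof.
move=> covered sorted_h [size_lam sorted_lam char_L] kM kN.
rewrite -[X in lam`_(X - k - 1)]size_lam.
apply: sorted_nth_le_of_count; rewrite ?size_lam //.
set c := nth 0%N (hsizes C) (M - 1 - k).
pose B := map_mx (real_complex R) (nincidence C).
have char_S : char_poly (B *m B^t*) = \prod_(x <- map (real_complex R) lam) ('X - x%:P).
  rewrite -map_complex_gram -map_char_poly -char_poly_vlaplacian // char_L.
  by rewrite map_prod_XsubC big_map.
have f_lt (t : 'I_k) : (M - k + t < M)%N by have := ltn_ord t; lia.
pose top (t : 'I_k) : 'I_M := Ordinal (f_lt t).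
have count_C :
    (count (fun x : R[i] => (c%:R < x)%R) (map (real_complex R) lam) <= k)%N.
  apply: (spectral_count_le (gram_normal B) (G := colsub top B)) char_S _ => x xG.
  apply: (quad_form_bound (h := hedge C) (killed := fun j : 'I_M => (M - k <= j)%N)).
  - exact: ler0n.
  - by move=> u j /nincidence_supp u_out; rewrite mxE u_out rmorph0.
  - move=> u; rewrite -(rmorph1 (real_complex R)) -(nincidence_row_sqnorm covered u).
    rewrite rmorph_sum; apply: eq_bigr => j _.
    by rewrite normCK mxE conj_real_complex rmorphXn.
  - move=> j; rewrite -ltnNge => j_small; rewrite ler_nat -nth_hsizes.
    by apply: (sorted_leq_nth leq_trans leqnn 0%N sorted_h); rewrite ?inE ?size_hsizes; lia.
  - move=> j j_big; have t_lt : (j - (M - k) < k)%N by have := ltn_ord j; lia.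
    have -> : j = top (Ordinal t_lt) by apply/val_inj => /=; lia.
    by move/matrixP: xG => /(_ 0 (Ordinal t_lt)); rewrite mulmx_colsub !mxE.
apply: leq_trans count_C; rewrite count_map; apply/eq_leq/eq_count => x /=.
by rewrite -(rmorph_nat (real_complex R)) ltcR.
Qed.

(* 1-indexed: lambda_i = lam`_(i-1), |h_i| = nth 0 (hsizes C) (i-1). *)
Theorem mainTheorem9 (R : realType) (N M : nat) (C : 'M[R]_(N, M))
  (lam : seq R) :
  hedges_nonempty C -> vertices_covered C -> hconnected C ->
  sorted leq (hsizes C) ->
  eigenvalue_list (vlaplacian C) lam ->
  ((2 <= N)%N -> (2 <= M)%N ->
     lam`_(N - 2) <= Num.max ((nth 0 (hsizes C) (M - 1))%:R - 1)
                             (nth 0 (hsizes C) (M - 2))%:R)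
  /\
  (forall k : nat, (1 <= k)%N -> (k <= minn N M - 1)%N ->
     lam`_(N - k - 1) <=
       \big[Num.max/0]_(i < k.+1)
          ((nth 0 (hsizes C) (M - 1 - i))%:R - k%:R + i%:R)).
Proof.
move=> _ covered _ sorted_h ev; split=> [N2 M2 | k k_ge1 k_le].
- (* k = 1: |h_{M-1}| is the second argument of the max *)
  have := eigenvalue_le_hsize covered sorted_h ev M2 N2.
  by rewrite -!subnDA => /le_trans; apply; rewrite le_max lexx orbT.
- (* the term i = k of the maximum is |h_{M-k}| *)
  have [kM kN] : (k < M)%N /\ (k < N)%N by lia.
  have := eigenvalue_le_hsize covered sorted_h ev kM kN => /le_trans; apply.
  have := le_bigmax 0 (fun i : 'I_k.+1 =>
    ((nth 0 (hsizes C) (M - 1 - i))%:R - k%:R + i%:R : R)) ord_max.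
  by rewrite /= subrK.
Qed.
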